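(* Let $s$ be a positive integer and let $h_{s,i,j}$ be as in the context. Then for $0\le i\le s$, $$\sum_{j'=i+1}^{s}h_{s,i,j'}=(-1)^i\binom{s-1}{i}\Big[\frac1s\binom{2s}{s-1}-1\Big],$$ and for $s<i\le 2s$, $$\sum_{j'=0}^{i-s-1}h_{s,2s-i,s-j'}=(-1)^i\binom{s-1}{2s-i}\Big[\frac1s\binom{2s}{s-1}-1\Big].$$
   Context: For a fixed positive integer $s$, the numbers $h_{s,i,j}$ (integers $i\ge 0$, $j$) are defined recursively by: $h_{s,i,j}=0$ if $j\le i$; for $i=0$ and $j\ge 1$, $h_{s,0,j}=\binom{s+j-1}{j}\frac{s-j}{s}$; for $i>0$ and $j>i$, $h_{s,i,j}=-\frac{s-j+1}{i}h_{s,i-1,j-1}-\frac{j-i}{i}h_{s,i-1,j}$. Binomial coefficients $\binom{a}{b}$ with $0\le a<b$ are $0$. *)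

From mathcomp Require Import all_boot all_algebra.
Set Implicit Arguments. Unset Strict Implicit. Unset Printing Implicit Defensive.
Import GRing.Theory Num.Theory.
Local Open Scope ring_scope.

(* h s i j = h_{s,i,j} as a rational number; i, j are naturals
   (for j <= i, including all negative j, the value is 0, and the
   recursion never needs negative j). *)
Fixpoint h (s i j : nat) : rat :=
  match i with
  | 0 => if (j <= 0)%N then 0
         else ('C(s + j - 1, j))%:R * ((s%:R - j%:R) / s%:R)
  | i'.+1 =>
      if (j <= i)%N then 0
      else - ((s%:R - j%:R + 1) / i%:R) * h s i' (j - 1)
           - ((j%:R - i%:R) / i%:R) * h s i' j
  end.

From mathcomp Require Import all_boot all_algebra.
From mathcomp Require Import zify ring.
Import GRing.Theory Num.Theory.
Local Open Scope ring_scope.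

(* Summing the recursion over j, the shift j -> j - 1 in its first term turns
   the factor s - j + 1 into s - j, so the row sums H_i = sum_(j <= s) h_{s,i,j}
   satisfy H_(i+1) = -(s - i - 1)/(i + 1) H_i, i.e. H_i = (-1)^i C(s-1,i) H_0.
   As (s - j)/s C(s+j-1,j) = C(s+j-1,j) - C(s+j-1,j-1), two hockey-stick sums
   give H_0 = C(2s,s) - 1 - C(2s,s-1) = C(2s,s-1)/s - 1.  The second identity
   is the first one for 2s - i, summed backwards. *)

Lemma sum_bin_diag n m : (\sum_(k < m.+1) 'C(n + k, k) = 'C(n + m.+1, m))%N.
Proof.
elim: m => [|m IH]; first by rewrite big_ord1 !bin0.
by rewrite big_ord_recr /= IH [in RHS]addnS binS addnC.
Qed.

Lemma h_small s i j : (j <= i)%N -> h s i j = 0.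
Proof. by case: i => [|i] /= ->. Qed.

Lemma hS s i j : h s i.+1 j =
  - ((s%:R - j%:R + 1) / i.+1%:R) * h s i (j - 1)
  - ((j%:R - i.+1%:R) / i.+1%:R) * h s i j.
Proof.
rewrite /=; case: ifP => // le_jSi.
rewrite (@h_small s i (j - 1)); last lia.
have [le_ji | lt_ij] := leqP j i; first by rewrite h_small // !mulr0 subr0.
have -> : j = i.+1 by lia.
by rewrite subrr !mul0r mulr0 subr0.
Qed.

Definition hsum s i := \sum_(j < s.+1) h s i j.

Lemma hsumS s i : hsum s i.+1 = - ((s%:R - i.+1%:R) / i.+1%:R) * hsum s i.
Proof.
rewrite /hsum; under eq_bigr => j _ do rewrite hS.
rewrite big_split /= big_ord_recl sub0n h_small // mulr0 add0r.
have shift : \sum_(j < s) - ((s%:R - (bump 0 j)%:R + 1) / i.+1%:R) * h s i (bump 0 j - 1)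
    = \sum_(j < s.+1) - ((s%:R - j%:R) / i.+1%:R) * h s i j.
  rewrite big_ord_recr /= subrr mul0r oppr0 mul0r addr0.
  by apply: eq_bigr => j _; rewrite /bump add1n subn1 /= -natr1 opprD addrA subrK.
rewrite shift -big_split mulr_sumr; apply: eq_bigr => j _ /=; ring.
Qed.

Lemma hsumE n i : hsum n.+1 i = (-1) ^+ i * 'C(n, i)%:R * hsum n.+1 0.
Proof.
elim: i => [|i IH]; first by rewrite expr0 bin0 !mul1r.
have i1_neq0 : (i.+1%:R : rat) != 0 by rewrite pnatr_eq0.
have bin_ratio : 'C(n, i.+1)%:R = (n.+1%:R - i.+1%:R) / i.+1%:R * 'C(n, i)%:R :> rat.
  apply: (mulfI i1_neq0); rewrite mulrA mulrCA divff // mulr1 -natrM mul_bin_left.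
  have [le_in | lt_ni] := leqP i n; first by rewrite natrM -natrB // subSS.
  by rewrite bin_small // muln0 mulr0.
by rewrite hsumS IH bin_ratio exprS; ring.
Qed.

Lemma h0S n k : h n.+1 0 k.+1 = 'C(n.+1 + k, k.+1)%:R - 'C(n.+1 + k, k)%:R.
Proof.
have n1_neq0 : (n.+1%:R : rat) != 0 by rewrite pnatr_eq0.
have bin_ratio : k.+1%:R * 'C(n.+1 + k, k.+1)%:R = n.+1%:R * 'C(n.+1 + k, k)%:R :> rat.
  by rewrite -!natrM mul_bin_left addnK.
rewrite /= addnS subn1 /= -['C(n.+1 + k, k)%:R](mulKf n1_neq0) -bin_ratio.
by field; rewrite addrC natr1.
Qed.

Lemma hsum0 n : hsum n.+1 0 = 'C(2 * n.+1, n)%:R / n.+1%:R - 1.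
Proof.
have n1_neq0 : (n.+1%:R : rat) != 0 by rewrite pnatr_eq0.
rewrite /hsum big_ord_recl h_small // add0r.
under eq_bigr => k _ do rewrite lift0 h0S.
rewrite sumrB -!natr_sum sum_bin_diag mul2n -addnn.
have upper : (\sum_(k < n.+1) 'C(n.+1 + k, k.+1))%:R = 'C(n.+1 + n.+1, n.+1)%:R - 1 :> rat.
  rewrite [in RHS]addSnnS -(sum_bin_diag n n.+1) [in RHS]big_ord_recl bin0 natrD addrAC subrr add0r.
  by congr _%:R; apply: eq_bigr => k _; rewrite lift0 addSnnS.
have central : 'C(n.+1 + n.+1, n.+1)%:R = n.+2%:R * 'C(n.+1 + n.+1, n)%:R / n.+1%:R :> rat.
  apply: (mulfI n1_neq0); rewrite mulrCA divff // mulr1 -!natrM mul_bin_left.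
  by congr (_ * _)%:R; lia.
by rewrite upper central; field; rewrite addrC natr1.
Qed.

Lemma hsum_from s i : (i <= s)%N -> \sum_(i.+1 <= j < s.+1) h s i j = hsum s i.
Proof.
move=> le_is; rewrite /hsum -(big_mkord xpredT) [RHS](big_cat_nat _ (n := i.+1)) //=.
suff -> : \sum_(0 <= j < i.+1) h s i j = 0 by rewrite add0r.
by rewrite big_nat_cond big1 // => j /andP[/andP[_ le_ji] _]; exact: h_small.
Qed.

Lemma sum_h_rev s k : (k <= s)%N ->
  \sum_(0 <= j < s - k) h s k (s - j) = \sum_(k.+1 <= j < s.+1) h s k j.
Proof.
move=> le_ks; rewrite -[k.+1]add0n big_addn subSS big_nat_rev /=.
by apply: eq_big_nat => j /andP[_ lt_j]; congr (h _ _ _); lia.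
Qed.

Theorem proposition11 (s : nat) (hs : (0 < s)%N) :
  (forall i : nat, (i <= s)%N ->
     \sum_(i.+1 <= j < s.+1) h s i j
     = (-1) ^+ i * ('C(s - 1, i))%:R
       * (('C(2 * s, s - 1))%:R / s%:R - 1 : rat)) /\
  (forall i : nat, (s < i)%N -> (i <= 2 * s)%N ->
     \sum_(0 <= j' < i - s) h s (2 * s - i) (s - j')
     = (-1) ^+ i * ('C(s - 1, 2 * s - i))%:R
       * (('C(2 * s, s - 1))%:R / s%:R - 1 : rat)).
Proof.
case: s hs => // n _.
have first_half i : (i <= n.+1)%N -> \sum_(i.+1 <= j < n.+2) h n.+1 i j
    = (-1) ^+ i * 'C(n.+1 - 1, i)%:R * ('C(2 * n.+1, n.+1 - 1)%:R / n.+1%:R - 1).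
  by move=> le_in; rewrite hsum_from // hsumE hsum0 subn1.
split=> // i lt_ni le_i2n.
have -> : (i - n.+1 = n.+1 - (2 * n.+1 - i))%N by lia.
have le_mirror : (2 * n.+1 - i <= n.+1)%N by lia.
rewrite sum_h_rev // first_half //.
by congr (_ * _ * _); rewrite -signr_odd -[RHS]signr_odd oddN // oddM.
Qed.
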